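(* If $s>0$ is small enough, there exist real numbers $X_n,Y_n,Z_n,W_n$ (depending on $s$) such that $Q_n(1)=1$, $Q_n'(1)=1$, $Q_n(s^\nu)=s^\nu$ and $Q_n'(s^\nu)=1$, and these can be chosen so that $\lim_{s\to0^+}\frac{X_n-1}{s^\nu}=\frac{d_1(d_1-3)(d_n-1)}{(d_1-1)^2d_n}$, $\lim_{s\to0^+}\frac{Y_n}{s^\nu}=\frac{2d_1(d_n-1)}{(d_1-1)d_n}$, $\lim_{s\to0^+}\frac{Z_n-1}{s^\nu}=0$, $\lim_{s\to0^+}\frac{W_n}{s^\nu}=\frac{d_n-1}{d_n}$.
   Context: $n\ge3$ odd, $d_1,\dots,d_n$ positive integers with $\sum1/d_i<1$, $d_{\max}=\max_id_i$, $D_i=d_i+d_{i+1}$, $\tau=\bigl(d_1d_nd_{\max}^{2(d_1-d_n)/d_1}\bigr)^{1/\sum_{i=1}^{n-1}(d_n/d_i)}$, $\nu=\frac{d_n}{d_n-1}\sum_{i=1}^{n-1}\frac1{d_i}$, $b_1=(d_{\max}^2\tau s)^{1/d_1}$, $b_i=(\tau s)^{1/d_i}b_{i-1}$ ($2\le i\le n-1$), and $Q_n(z)=\frac{d_1z^{d_n}}{(d_1-1)X_nz^{d_1}+Y_nz+Z_n}\prod_{i=1}^{n-1}(z^{D_i}-b_i^{D_i})^{(-1)^{i-1}}+W_n$. *)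

From Stdlib Require Import Reals Lra Lia.
Open Scope R_scope.

Fixpoint sumR (f : nat -> R) (m : nat) : R :=
  match m with O => 0 | S k => sumR f k + f (S k) end.

Fixpoint prodR (f : nat -> R) (m : nat) : R :=
  match m with O => 1 | S k => prodR f k * f (S k) end.

Fixpoint dmax (d : nat -> nat) (n : nat) : nat :=
  match n with O => 0%nat | S k => Nat.max (dmax d k) (d (S k)) end.

Definition tau (d : nat -> nat) (n : nat) : R :=
  Rpower (INR (d 1%nat) * INR (d n) *
          Rpower (INR (dmax d n))
                 (2 * (INR (d 1%nat) - INR (d n)) / INR (d 1%nat)))
         (1 / sumR (fun i => INR (d n) / INR (d i)) (n - 1)).

Definition nu (d : nat -> nat) (n : nat) : R :=
  INR (d n) / (INR (d n) - 1) * sumR (fun i => 1 / INR (d i)) (n - 1).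

Fixpoint bb (d : nat -> nat) (n : nat) (s : R) (i : nat) : R :=
  match i with
  | O => 0
  | S O => Rpower (INR (dmax d n) ^ 2 * tau d n * s) (1 / INR (d 1%nat))
  | S k => Rpower (tau d n * s) (1 / INR (d i)) * bb d n s k
  end.

Definition DD (d : nat -> nat) (i : nat) : nat := (d i + d (S i))%nat.

Definition Qfactor (d : nat -> nat) (n : nat) (s z : R) (i : nat) : R :=
  powerRZ (z ^ DD d i - bb d n s i ^ DD d i) ((-1) ^ Z.of_nat (i - 1))%Z.

Definition Qn (d : nat -> nat) (n : nat) (s X Y Z W : R) (z : R) : R :=
  INR (d 1%nat) * z ^ d n /
    ((INR (d 1%nat) - 1) * X * z ^ d 1%nat + Y * z + Z)
  * prodR (Qfactor d n s z) (n - 1) + W.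

From Stdlib Require Import Reals Lra Lia ZArith ClassicalChoice.
From Coquelicot Require Import Coquelicot.
Open Scope R_scope.

(* Write Q(z) = d_1 z^(d_n) P(z) / D(z) + W with D(z) = (d_1 - 1) X z^(d_1) + Y z + Z and
   P the alternating product of the factors z^(D_i) - b_i^(D_i).  The
      intermediate value theorem gives a root u(s) -> 0, whence the asymptotics.
   3. Concrete data ([Qn_data]): b_i = exp(c0 + e_i ln(tau s)) with e_i = sum_(j<=i) 1/d_j;
      the exponent inequalities make b_i^(D_i) and t^(D_i)/b_i^(D_i) of order o(t), the
      choice of tau normalizes d_1 t^(d_n) prod b_i^(+-D_i) = t/d_n, and the derivative of
      Q_n is computed; so Q_n fits part 2.  Lemma 3.2 combines the two. *)

(** * Limits as [s -> 0+] and properties holding for small [s > 0] *)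

Definition lim0 (f : R -> R) (l : R) := limit1_in f (fun s => 0 < s) l 0.

Definition near0 (P : R -> Prop) := exists del, 0 < del /\ forall s, 0 < s < del -> P s.

Lemma lim0_def f l : lim0 f l <->
  forall eps, 0 < eps -> exists del, 0 < del /\ forall s, 0 < s < del -> Rabs (f s - l) < eps.
Proof.
  unfold lim0, limit1_in, limit_in; simpl; unfold R_dist; split.
  - intros H eps He. destruct (H eps He) as [a [Ha H2]]. exists a; split; auto.
    intros s Hs. apply H2. split; [lra|]. rewrite Rminus_0_r, Rabs_right; lra.
  - intros H eps He. destruct (H eps He) as [a [Ha H2]]. exists a; split; auto.
    intros s [Hs1 Hs2]. apply H2. rewrite Rminus_0_r, Rabs_right in Hs2; lra.
Qed.

Lemma near0_and P Q : near0 P -> near0 Q -> near0 (fun s => P s /\ Q s).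
Proof.
  intros [a [Ha HP]] [b [Hb HQ]]. exists (Rmin a b); split; [apply Rmin_glb_lt; auto|].
  intros s Hs. pose proof (Rmin_l a b); pose proof (Rmin_r a b).
  split; [apply HP|apply HQ]; lra.
Qed.

Lemma near0_mono (P Q : R -> Prop) : (forall s, 0 < s -> P s -> Q s) -> near0 P -> near0 Q.
Proof.
  intros H [a [Ha HP]]. exists a; split; auto. intros s Hs. apply H; [lra|]. apply HP; auto.
Qed.

Lemma near0_all (P : R -> Prop) : (forall s, 0 < s -> P s) -> near0 P.
Proof. intros H. exists 1; split; [lra|]. intros s Hs; apply H; lra. Qed.

Lemma near0_forall_fin (P : nat -> R -> Prop) k : (forall i, (1 <= i <= k)%nat -> near0 (P i)) ->
  near0 (fun s => forall i, (1 <= i <= k)%nat -> P i s).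
Proof.
  induction k as [|k IH]; intros H; [apply near0_all; intros; lia|].
  apply near0_mono with (2 := near0_and _ _ (IH ltac:(intros; apply H; lia)) (H (S k) ltac:(lia))).
  intros s _ [H1 H2] i Hi. destruct (Nat.eq_dec i (S k)); [subst; auto|apply H1; lia].
Qed.

Lemma lim0_ext_near f g l : near0 (fun s => f s = g s) -> lim0 g l -> lim0 f l.
Proof.
  intros [a [Ha HE]] H. apply lim0_def. intros eps He.
  rewrite lim0_def in H. destruct (H eps He) as [b [Hb H2]].
  exists (Rmin a b); split; [apply Rmin_glb_lt; auto|].
  intros s Hs. pose proof (Rmin_l a b); pose proof (Rmin_r a b).
  rewrite HE by lra. apply H2; lra.
Qed.

Lemma lim0_ext f g l : (forall s, 0 < s -> f s = g s) -> lim0 g l -> lim0 f l.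
Proof. intros H. apply lim0_ext_near, near0_all; auto. Qed.

Lemma lim0_val f a b : lim0 f a -> a = b -> lim0 f b.
Proof. intros H ->; auto. Qed.

Lemma lim0_gt f l a : lim0 f l -> a < l -> near0 (fun s => a < f s).
Proof.
  intros H Ha. rewrite lim0_def in H. destruct (H (l - a)) as [b [Hb H2]]; [lra|].
  exists b; split; auto. intros s Hs. specialize (H2 s Hs). apply Rabs_def2 in H2. lra.
Qed.

Lemma lim0_lt f l a : lim0 f l -> l < a -> near0 (fun s => f s < a).
Proof.
  intros H Ha. rewrite lim0_def in H. destruct (H (a - l)) as [b [Hb H2]]; [lra|].
  exists b; split; auto. intros s Hs. specialize (H2 s Hs). apply Rabs_def2 in H2. lra.
Qed.

Lemma lim0_const c : lim0 (fun _ => c) c.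
Proof.
  apply lim0_def. intros eps He. exists 1; split; [lra|]. intros s _.
  rewrite Rminus_diag, Rabs_R0; lra.
Qed.

Lemma lim0_plus f g a b : lim0 f a -> lim0 g b -> lim0 (fun s => f s + g s) (a + b).
Proof. apply limit_plus. Qed.
Lemma lim0_minus f g a b : lim0 f a -> lim0 g b -> lim0 (fun s => f s - g s) (a - b).
Proof. apply limit_minus. Qed.
Lemma lim0_mul f g a b : lim0 f a -> lim0 g b -> lim0 (fun s => f s * g s) (a * b).
Proof. apply limit_mul. Qed.
Lemma lim0_opp f a : lim0 f a -> lim0 (fun s => - f s) (- a).
Proof. apply limit_Ropp. Qed.
Lemma lim0_inv f a : lim0 f a -> a <> 0 -> lim0 (fun s => / f s) (/ a).
Proof. apply limit_inv. Qed.
Lemma lim0_div f g a b : lim0 f a -> lim0 g b -> b <> 0 -> lim0 (fun s => f s / g s) (a / b).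
Proof. intros. apply lim0_mul; auto. apply lim0_inv; auto. Qed.

Lemma lim0_pow f a k : lim0 f a -> lim0 (fun s => f s ^ k) (a ^ k).
Proof. intros H; induction k; simpl; [apply lim0_const|apply lim0_mul; auto]. Qed.

Lemma lim0_bounded u f M : near0 (fun s => Rabs (u s) <= M) -> lim0 f 0 ->
  lim0 (fun s => u s * f s) 0.
Proof.
  intros [a [Ha HB]] H. apply lim0_def. intros eps He.
  rewrite lim0_def in H. destruct (H (eps / (Rabs M + 1))) as [b [Hb H2]].
  { apply Rdiv_lt_0_compat; auto. pose proof (Rabs_pos M); lra. }
  exists (Rmin a b); split; [apply Rmin_glb_lt; auto|].
  intros s Hs. pose proof (Rmin_l a b); pose proof (Rmin_r a b).
  specialize (HB s ltac:(lra)). specialize (H2 s ltac:(lra)).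
  rewrite Rminus_0_r in *. rewrite Rabs_mult.
  pose proof (Rabs_pos M). pose proof (Rle_abs M). pose proof (Rabs_pos (f s)).
  assert (Hq : Rabs (f s) * (Rabs M + 1) < eps).
  { apply (Rmult_lt_compat_r (Rabs M + 1)) in H2; [|lra].
    unfold Rdiv in H2. rewrite Rmult_assoc, Rinv_l in H2 by lra. lra. }
  nra.
Qed.

Lemma lim0_exp_ln K c : 0 < c -> lim0 (fun s => exp (K + c * ln s)) 0.
Proof.
  intros Hc. apply lim0_def. intros eps He.
  exists (exp ((ln eps - K) / c)); split; [apply exp_pos|].
  intros s [Hs1 Hs2]. rewrite Rminus_0_r, Rabs_right by (left; apply exp_pos).
  apply ln_lt_inv; auto; [apply exp_pos|]. rewrite ln_exp.
  apply ln_increasing in Hs2; auto. rewrite ln_exp in Hs2.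
  apply (Rmult_lt_compat_l c) in Hs2; auto.
  replace (c * ((ln eps - K) / c)) with (ln eps - K) in Hs2 by (field; lra). lra.
Qed.

(** * Finite sums and products, alternating exponents *)

Lemma sumR_ext f g k : (forall i, (1 <= i <= k)%nat -> f i = g i) -> sumR f k = sumR g k.
Proof. induction k; simpl; intros H; auto. rewrite IHk, H; [auto|lia|intros; apply H; lia]. Qed.

Lemma prodR_ext f g k : (forall i, (1 <= i <= k)%nat -> f i = g i) -> prodR f k = prodR g k.
Proof. induction k; simpl; intros H; auto. rewrite IHk, H; [auto|lia|intros; apply H; lia]. Qed.

Lemma prodR_mult f g k : prodR (fun i => f i * g i) k = prodR f k * prodR g k.
Proof. induction k; simpl; [ring|rewrite IHk; ring]. Qed.

Lemma prodR_exp f k : prodR (fun i => exp (f i)) k = exp (sumR f k).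
Proof. induction k; simpl; [rewrite exp_0; auto|rewrite IHk, exp_plus; auto]. Qed.

Lemma prodR_const c k : prodR (fun _ => c) k = c ^ k.
Proof. induction k; simpl; auto. rewrite IHk; ring. Qed.

Lemma sumR_plus f g k : sumR (fun i => f i + g i) k = sumR f k + sumR g k.
Proof. induction k; simpl; [ring|rewrite IHk; ring]. Qed.

Lemma sumR_scal c f k : sumR (fun i => c * f i) k = c * sumR f k.
Proof. induction k; simpl; [ring|rewrite IHk; ring]. Qed.

Lemma sumR_mono f k k' : (k <= k')%nat -> (forall i, (1 <= i <= k')%nat -> 0 <= f i) ->
  sumR f k <= sumR f k'.
Proof.
  intros Hk H. induction Hk; [lra|]. simpl. pose proof (H (S m) ltac:(lia)).
  assert (sumR f k <= sumR f m) by (apply IHHk; intros; apply H; lia). lra.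
Qed.

Lemma exp_pow x k : exp x ^ k = exp (INR k * x).
Proof.
  induction k; simpl; [rewrite Rmult_0_l, exp_0; auto|].
  rewrite IHk, <- exp_plus. f_equal. destruct k; simpl; ring.
Qed.

Lemma exp_div a b : exp a / exp b = exp (a - b).
Proof. unfold Rdiv, Rminus. rewrite exp_plus, exp_Ropp. auto. Qed.

(* The sign [(-1)^(i-1)] and the alternating power [x^((-1)^(i-1))]. *)
Definition sgn (i : nat) : R := if Nat.odd i then 1 else -1.
Definition altp (i : nat) (x : R) : R := if Nat.odd i then x else / x.

Lemma sgn_S i : sgn (S i) = - sgn i.
Proof. unfold sgn. rewrite Nat.odd_succ, <- Nat.negb_odd. destruct (Nat.odd i); simpl; ring. Qed.

Lemma altp_mult i x y : altp i (x * y) = altp i x * altp i y.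
Proof. unfold altp. destruct (Nat.odd i); auto. apply Rinv_mult. Qed.

Lemma altp_m1 i : altp i (-1) = -1.
Proof. unfold altp. destruct (Nat.odd i); auto. field. Qed.

Lemma altp_exp i y : altp i (exp y) = exp (sgn i * y).
Proof.
  unfold altp, sgn. destruct (Nat.odd i); [f_equal; ring|rewrite <- exp_Ropp; f_equal; ring].
Qed.

Lemma powerRZ_alt x i : (1 <= i)%nat -> powerRZ x ((-1) ^ Z.of_nat (i - 1))%Z = altp i x.
Proof.
  intros Hi. assert (Hz : forall k, ((-1) ^ Z.of_nat k)%Z = if Nat.even k then 1%Z else (-1)%Z).
  { induction k; [reflexivity|]. rewrite Nat2Z.inj_succ, Z.pow_succ_r, IHk by lia.
    rewrite Nat.even_succ, <- Nat.negb_even. destruct (Nat.even k); reflexivity. }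
  rewrite Hz. unfold altp. destruct i; [lia|]. replace (S i - 1)%nat with i by lia.
  rewrite Nat.odd_succ. destruct (Nat.even i); simpl; rewrite ?Rmult_1_r; auto.
Qed.

(** * Quantities of order [o(t)] for a small parameter [t] *)

Section SmallParameter.
Variable t : R -> R.
Hypothesis t_pos : forall s, 0 < s -> 0 < t s.
Hypothesis t_lim : lim0 t 0.

Lemma t_neq0 s : 0 < s -> t s <> 0.
Proof. intros Hs. apply Rgt_not_eq, t_pos; auto. Qed.

Lemma lim0_of_ratio f a : lim0 (fun s => f s / t s) a -> lim0 f 0.
Proof.
  intros H. apply lim0_ext with (g := fun s => f s / t s * t s).
  { intros s Hs. field. apply t_neq0; auto. }
  apply lim0_val with (a * 0); [apply lim0_mul; auto|ring].
Qed.

Lemma lim0_one_of_ratio f : lim0 (fun s => (f s - 1) / t s) 0 -> lim0 f 1.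
Proof.
  intros H. apply lim0_ext with (g := fun s => 1 + (f s - 1)); [intros; ring|].
  apply lim0_val with (1 + 0); [|ring].
  apply lim0_plus; [apply lim0_const|eapply lim0_of_ratio; eauto].
Qed.

Variable x : nat -> R -> R.

Lemma altprod_one_plus_o k : (forall i, (1 <= i <= k)%nat -> lim0 (fun s => x i s / t s) 0) ->
  lim0 (fun s => (prodR (fun i => altp i (1 - x i s)) k - 1) / t s) 0.
Proof.
  induction k as [|k IH]; intros H; simpl.
  - apply lim0_ext with (g := fun _ => 0); [intros; unfold Rdiv; ring|apply lim0_const].
  - assert (IHk := IH ltac:(intros; apply H; lia)).
    assert (Hx := H (S k) ltac:(lia)). assert (Hx0 := lim0_of_ratio _ _ Hx).
    assert (Hsmall : near0 (fun s => x (S k) s < 1/2)) by (apply lim0_lt with 0; auto; lra).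
    set (P := fun s => prodR (fun i => altp i (1 - x i s)) k).
    assert (HG : lim0 (fun s => altp (S k) (1 - x (S k) s)) 1 /\
                 lim0 (fun s => (altp (S k) (1 - x (S k) s) - 1) / t s) 0).
    { unfold altp. destruct (Nat.odd (S k)).
      - split; [apply lim0_val with (1 - 0); [apply lim0_minus; auto; apply lim0_const|ring]|].
        apply lim0_ext with (g := fun s => - (x (S k) s / t s)); [intros; unfold Rdiv; ring|].
        apply lim0_val with (- 0); [apply lim0_opp; auto|ring].
      - assert (Hinv : lim0 (fun s => / (1 - x (S k) s)) (/ (1 - 0))).
        { apply lim0_inv; [apply lim0_minus; auto; apply lim0_const|lra]. }
        rewrite Rminus_0_r, Rinv_1 in Hinv. split; auto.
        apply lim0_ext_near with (g := fun s => (x (S k) s / t s) * / (1 - x (S k) s)).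
        { apply near0_mono with (2 := Hsmall). intros s Hs Hl.
          field. split; [lra|apply t_neq0; auto]. }
        apply lim0_val with (0 * 1); [apply lim0_mul; auto|ring]. }
    destruct HG as [HG1 HG2].
    apply lim0_ext with (g := fun s => (P s - 1) / t s * altp (S k) (1 - x (S k) s)
                                     + (altp (S k) (1 - x (S k) s) - 1) / t s).
    { intros s Hs. unfold P. field. apply t_neq0; auto. }
    apply lim0_val with (0 * 1 + 0); [|ring]. apply lim0_plus; auto. apply lim0_mul; auto.
Qed.

Variable c : nat -> R.

Lemma weighted_sum_o k : (forall i, (1 <= i <= k)%nat -> lim0 (fun s => x i s / t s) 0) ->
  lim0 (fun s => sumR (fun i => c i * (x i s / (1 - x i s))) k / t s) 0.
Proof.
  induction k as [|k IH]; intros H; simpl.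
  - apply lim0_ext with (g := fun _ => 0); [intros; unfold Rdiv; ring|apply lim0_const].
  - assert (IHk := IH ltac:(intros; apply H; lia)).
    assert (Hx := H (S k) ltac:(lia)). assert (Hx0 := lim0_of_ratio _ _ Hx).
    assert (Hsmall : near0 (fun s => x (S k) s < 1/2)) by (apply lim0_lt with 0; auto; lra).
    apply lim0_ext_near with (g := fun s => sumR (fun i => c i * (x i s / (1 - x i s))) k / t s
       + c (S k) * (x (S k) s / t s) * / (1 - x (S k) s)).
    { apply near0_mono with (2 := Hsmall). intros s Hs Hl. field. split; [lra|apply t_neq0; auto]. }
    apply lim0_val with (0 + c (S k) * 0 * / (1 - 0)); [|ring].
    apply lim0_plus; auto. apply lim0_mul; [apply lim0_mul; auto; apply lim0_const|].
    apply lim0_inv; [apply lim0_minus; auto; apply lim0_const|lra].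
Qed.
End SmallParameter.

(** * The interpolation system *)

(* The denominator [D(z) = (k-1) X z^k + Y z + Z] of [Q_n] (with [k = d_1]) and its derivative. *)
Definition den (k : nat) (X Y Z z : R) : R := (INR k - 1) * X * z ^ k + Y * z + Z.
Definition dden (k : nat) (X Y z : R) : R := (INR k - 1) * X * (INR k * z ^ pred k) + Y.

Lemma den_derivable k X Y Z z : derivable_pt_lim (den k X Y Z) z (dden k X Y z).
Proof. apply is_derive_Reals. unfold den, dden. auto_derive; auto. ring. Qed.

(* The four conditions [Q(1) = 1], [Q'(1) = 1], [Q(t) = t], [Q'(t) = 1] for
   [Q(z) = k z^c P(z) / D(z) + W], written in terms of [p1 = P(1)], the logarithmic
   derivative [k - c + l1] of [P] at [1], and the analogous data [pt], [- lt] at [t]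
   (normalized so that [k t^c P(t) = t pt / c]); see [Qn_interpolates]. *)
Definition interp_system (k : nat) (c t p1 l1 pt lt X Y Z W : R) : Prop :=
  den k X Y Z 1 <> 0 /\ den k X Y Z t <> 0 /\
  INR k * p1 / den k X Y Z 1 + W = 1 /\
  (INR k * (c * p1 + p1 * (INR k - c + l1)) * den k X Y Z 1
     - dden k X Y 1 * (INR k * p1)) / den k X Y Z 1 ^ 2 = 1 /\
  t / c * pt / den k X Y Z t + W = t /\
  ((pt - pt * lt / c) * den k X Y Z t - dden k X Y t * (t / c * pt)) / den k X Y Z t ^ 2 = 1.

(** * Solving the interpolation system for small [t] *)

(* Prescribing [D(t) = 1 + u t], the first three conditions determine [W],
   [D(1)], [D'(1)] and then [X, Y, Z] linearly; the fourth becomes a scalar equation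
   [H(u) = 0] with [H(u) / t = -u + o(1)] uniformly for [|u| <= 1], solved by the
   intermediate value theorem. *)
Section Interpolation.
Variables (k : nat) (c : R) (t P1 L1 Pt Lt : R -> R).
Hypothesis k_ge2 : (2 <= k)%nat.
Hypothesis c_ge2 : 2 <= c.
Hypothesis t_pos : forall s, 0 < s -> 0 < t s.
Hypothesis t_lim : lim0 t 0.
Hypothesis P1_exp : lim0 (fun s => (P1 s - 1) / t s) 0.
Hypothesis L1_small : lim0 (fun s => L1 s / t s) 0.
Hypothesis Pt_exp : lim0 (fun s => (Pt s - 1) / t s) 0.
Hypothesis Lt_small : lim0 (fun s => Lt s / t s) 0.

Ltac t_nonzero := match goal with
  | |- t ?s <> 0 => apply t_neq0; auto; lra
  | |- _ => intro; lra end.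
Ltac field_side := repeat split; try t_nonzero.

Definition kk := INR k.
Definition A := kk - 1.

Lemma kk_ge2 : 2 <= kk.
Proof. unfold kk. replace 2 with (INR 2) by (simpl; lra). apply le_INR; auto. Qed.
Lemma A_ge1 : 1 <= A.
Proof. unfold A. pose proof kk_ge2. lra. Qed.

(* Prescribed value [D(t)], then the values of [W], [D(1)], [D'(1)] forced by the
   conditions at [t] and at [1]. *)
Definition Dt_of s u := 1 + u * t s.
Definition W_of s u := t s - t s / c * Pt s / Dt_of s u.
Definition D1_of s u := kk * P1 s / (1 - W_of s u).
Definition dD1_of s u := D1_of s u * (A + L1 s - W_of s u / (1 - W_of s u)).

(* The coefficients solving [D(1) = D1_of], [D'(1) = dD1_of], [D(t) = Dt_of]. *)
Definition kappa s := 1 - t s ^ k - kk * (1 - t s).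
Definition X_of s u := (D1_of s u - Dt_of s u - dD1_of s u * (1 - t s)) / (A * kappa s).
Definition Y_of s u := dD1_of s u - A * kk * X_of s u.
Definition Z_of s u := D1_of s u - A * X_of s u - Y_of s u.

(* The defect [H] of the remaining condition [Q'(t) = 1], up to the factor [D(t)^2], and
   the part of [H / t] that is [o(1)] uniformly in bounded [u]. *)
Definition Nt s := Pt s * (1 - Lt s / c).
Definition defect s u :=
  Nt s * Dt_of s u - t s / c * Pt s * dden k (X_of s u) (Y_of s u) (t s) - Dt_of s u ^ 2.
Definition defect_rest s u :=
  (Nt s - 1) / t s - u * (u * t s) - Pt s * dden k (X_of s u) (Y_of s u) (t s) / c.

Lemma defect_split s u : 0 < s -> defect s u / t s = defect_rest s u - u * (2 - Nt s).
Proof. intros Hs. unfold defect, defect_rest, Dt_of. field; field_side. Qed.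

Lemma P1_lim : lim0 P1 1. Proof. apply lim0_one_of_ratio with t; auto. Qed.
Lemma Pt_lim : lim0 Pt 1. Proof. apply lim0_one_of_ratio with t; auto. Qed.
Lemma L1_lim : lim0 L1 0. Proof. apply lim0_of_ratio with t 0; auto. Qed.

Lemma Nt_exp : lim0 (fun s => (Nt s - 1) / t s) 0.
Proof.
  apply lim0_ext with (g := fun s => (Pt s - 1) / t s - Pt s * (Lt s / t s) / c).
  { intros s Hs. unfold Nt. field; field_side. }
  apply lim0_val with (0 - 1 * 0 / c); [|field; lra]. apply lim0_minus; auto.
  apply lim0_div; [apply lim0_mul; auto using Pt_lim|apply lim0_const|intro; lra].
Qed.
Lemma Nt_lim : lim0 Nt 1. Proof. apply lim0_one_of_ratio with t; auto using Nt_exp. Qed.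

Lemma kappa_lim : lim0 kappa (- A).
Proof.
  unfold kappa, A. apply lim0_val with (1 - 0 ^ k - kk * (1 - 0)).
  - apply lim0_minus; [apply lim0_minus; [apply lim0_const|apply lim0_pow; auto]|].
    apply lim0_mul; [apply lim0_const|apply lim0_minus; [apply lim0_const|auto]].
  - rewrite pow_i by lia. ring.
Qed.

Lemma near0_kappa : near0 (fun s => A * kappa s <> 0).
Proof.
  apply near0_mono with (2 := lim0_lt _ _ (- A / 2) kappa_lim ltac:(pose proof A_ge1; lra)).
  intros s _ H. pose proof A_ge1. apply Rlt_not_eq. nra.
Qed.

Lemma tpow_lim : lim0 (fun s => t s ^ pred k) 0.
Proof. apply lim0_val with (0 ^ pred k); [apply lim0_pow; auto|rewrite pow_i by lia; auto]. Qed.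

(* The first-order coefficient of [W]. *)
Definition w0 := 1 - 1 / c.

Section BoundedChoice.
Variable u : R -> R.
Hypothesis u_bounded : near0 (fun s => Rabs (u s) <= 1).

Lemma ut_lim : lim0 (fun s => u s * t s) 0.
Proof. apply lim0_bounded with 1; auto. Qed.

Lemma Dt_lim : lim0 (fun s => Dt_of s (u s)) 1.
Proof.
  unfold Dt_of. apply lim0_val with (1 + 0); [|ring].
  apply lim0_plus; [apply lim0_const|apply ut_lim].
Qed.

Lemma near0_Dt : near0 (fun s => 1/2 < Dt_of s (u s)).
Proof. apply lim0_gt with 1; [apply Dt_lim|lra]. Qed.

Lemma W_ratio : lim0 (fun s => W_of s (u s) / t s) w0.
Proof.
  apply lim0_ext_near with (g := fun s => 1 - Pt s / (c * Dt_of s (u s))).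
  { apply near0_mono with (2 := near0_Dt). intros s Hs Hb. unfold W_of. field; field_side. }
  unfold w0. apply lim0_val with (1 - 1 / (c * 1)); [|rewrite Rmult_1_r; auto].
  apply lim0_minus; [apply lim0_const|].
  apply lim0_div; [apply Pt_lim|apply lim0_mul; [apply lim0_const|apply Dt_lim]|intro; lra].
Qed.

Lemma W_lim : lim0 (fun s => W_of s (u s)) 0.
Proof. apply lim0_of_ratio with t w0; auto using W_ratio. Qed.

Lemma near0_W : near0 (fun s => W_of s (u s) < 1/2).
Proof. apply lim0_lt with 0; [apply W_lim|lra]. Qed.

Lemma one_minus_W_lim : lim0 (fun s => 1 - W_of s (u s)) 1.
Proof. apply lim0_val with (1 - 0); [apply lim0_minus; [apply lim0_const|apply W_lim]|ring]. Qed.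

Lemma D1_lim : lim0 (fun s => D1_of s (u s)) kk.
Proof.
  unfold D1_of. apply lim0_val with (kk * 1 / 1); [|field].
  apply lim0_div; [apply lim0_mul; [apply lim0_const|apply P1_lim]|apply one_minus_W_lim|lra].
Qed.

Definition D1_coef s := (D1_of s (u s) - kk) / t s.
Definition dD1_coef s := (dD1_of s (u s) - A * kk) / t s.

Lemma D1_coef_lim : lim0 D1_coef (kk * w0).
Proof.
  apply lim0_ext_near with
    (g := fun s => kk * ((P1 s - 1) / t s + W_of s (u s) / t s) / (1 - W_of s (u s))).
  { apply near0_mono with (2 := near0_W). intros s Hs HW.
    unfold D1_coef, D1_of. field; field_side. }
  apply lim0_val with (kk * (0 + w0) / 1); [|field].
  apply lim0_div; [|apply one_minus_W_lim|lra].
  apply lim0_mul; [apply lim0_const|apply lim0_plus; auto using W_ratio].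
Qed.

Lemma dD1_coef_lim : lim0 dD1_coef (A * kk * w0 - kk * w0).
Proof.
  apply lim0_ext_near with (g := fun s => A * D1_coef s
     + D1_of s (u s) * (L1 s / t s - (W_of s (u s) / t s) / (1 - W_of s (u s)))).
  { apply near0_mono with (2 := near0_W). intros s Hs HW.
    unfold dD1_coef, D1_coef, dD1_of. field; field_side. }
  apply lim0_val with (A * (kk * w0) + kk * (0 - w0 / 1)); [|field].
  apply lim0_plus; [apply lim0_mul; [apply lim0_const|apply D1_coef_lim]|].
  apply lim0_mul; [apply D1_lim|apply lim0_minus; auto].
  apply lim0_div; [apply W_ratio|apply one_minus_W_lim|lra].
Qed.

Lemma X_coef s : 0 < s -> A * kappa s <> 0 ->
  (X_of s (u s) - 1) / t s
  = (D1_coef s - u s - dD1_coef s + dD1_coef s * t s + A * t s ^ pred k) / (A * kappa s).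
Proof.
  intros Hs Hk. unfold D1_coef, dD1_coef, X_of. unfold kappa in *.
  assert (Ek : t s ^ k = t s * t s ^ pred k).
  { replace k with (S (pred k)) at 1 by lia. simpl; auto. }
  rewrite Ek in *. unfold A in *. unfold Dt_of.
  destruct (Rmult_neq_0_reg _ _ Hk) as [Hk1 Hk2].
  field. repeat split; auto; field_side.
Qed.

Lemma X_coef_main_lim : lim0 (fun s =>
  (D1_coef s - dD1_coef s + dD1_coef s * t s + A * t s ^ pred k) / (A * kappa s))
  (kk * w0 * (A - 2) / (A * A)).
Proof.
  pose proof A_ge1.
  eapply lim0_val; [apply lim0_div; [|apply lim0_mul; [apply lim0_const|apply kappa_lim]|]|].
  - apply lim0_plus; [apply lim0_plus; [apply lim0_minus|apply lim0_mul]|apply lim0_mul];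
      auto using D1_coef_lim, dD1_coef_lim, lim0_const, tpow_lim, t_lim.
  - intro; nra.
  - field. lra.
Qed.

Lemma X_lim : lim0 (fun s => X_of s (u s)) 1.
Proof.
  pose proof A_ge1.
  apply lim0_ext with (g := fun s => 1 + (X_of s (u s) - 1)); [intros; ring|].
  apply lim0_val with (1 + 0); [|ring]. apply lim0_plus; [apply lim0_const|].
  apply lim0_ext_near with (g := fun s =>
    (D1_coef s - dD1_coef s + dD1_coef s * t s + A * t s ^ pred k) / (A * kappa s) * t s
    - u s * t s / (A * kappa s)).
  { apply near0_mono with (2 := near0_kappa). intros s Hs HK.
    replace (X_of s (u s) - 1) with ((X_of s (u s) - 1) / t s * t s) by (field; field_side).
    rewrite X_coef by auto. field. destruct (Rmult_neq_0_reg _ _ HK); split; auto. }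
  eapply lim0_val; [apply lim0_minus; [apply lim0_mul; [apply X_coef_main_lim|apply t_lim]|]|].
  - apply lim0_div; [apply ut_lim|apply lim0_mul; [apply lim0_const|apply kappa_lim]|intro; nra].
  - field. lra.
Qed.

Lemma Y_lim : lim0 (fun s => Y_of s (u s)) 0.
Proof.
  unfold Y_of. apply lim0_val with (A * kk - A * kk * 1); [|ring].
  apply lim0_minus; [apply lim0_val with (kk * (A + 0 - 0 / 1)); [|field]|].
  - apply lim0_mul; [apply D1_lim|].
    apply lim0_minus; [apply lim0_plus; [apply lim0_const|apply L1_lim]|].
    apply lim0_div; [apply W_lim|apply one_minus_W_lim|lra].
  - apply lim0_mul; [apply lim0_const|apply X_lim].
Qed.

Lemma dDt_lim : lim0 (fun s => dden k (X_of s (u s)) (Y_of s (u s)) (t s)) 0.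
Proof.
  unfold dden. apply lim0_val with (A * 1 * (kk * 0) + 0); [|ring].
  apply lim0_plus; [|apply Y_lim].
  apply lim0_mul; [apply lim0_mul; [apply lim0_const|apply X_lim]|].
  apply lim0_mul; [apply lim0_const|apply tpow_lim].
Qed.

Lemma defect_rest_lim : lim0 (fun s => defect_rest s (u s)) 0.
Proof.
  unfold defect_rest. apply lim0_val with (0 - 0 - 1 * 0 / c); [|field; lra].
  apply lim0_minus; [apply lim0_minus; [apply Nt_exp|]|].
  { apply lim0_bounded with 1; auto using ut_lim. }
  apply lim0_div; [apply lim0_mul; [apply Pt_lim|apply dDt_lim]|apply lim0_const|intro; lra].
Qed.

Lemma root_lim : near0 (fun s => defect s (u s) = 0) -> lim0 u 0.
Proof.
  intros Hroot.
  assert (Hg : near0 (fun s => 1/2 < 2 - Nt s)).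
  { apply near0_mono with (2 := lim0_lt _ _ (3/2) Nt_lim ltac:(lra)). intros; lra. }
  apply lim0_ext_near with (g := fun s => defect_rest s (u s) / (2 - Nt s)).
  { apply near0_mono with (2 := near0_and _ _ Hroot Hg). intros s Hs [H1 H2].
    pose proof (defect_split s (u s) Hs) as E. rewrite H1 in E.
    replace (0 / t s) with 0 in E by (field; field_side).
    assert (defect_rest s (u s) = u s * (2 - Nt s)) as -> by lra. field. lra. }
  apply lim0_val with (0 / (2 - 1)); [|field].
  apply lim0_div; [apply defect_rest_lim|apply lim0_minus; [apply lim0_const|apply Nt_lim]|lra].
Qed.

Section VanishingChoice.
Hypothesis u_lim : lim0 u 0.

Lemma X_exp :
  lim0 (fun s => (X_of s (u s) - 1) / t s) (kk * (kk - 3) * (c - 1) / ((kk - 1) ^ 2 * c)).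
Proof.
  pose proof A_ge1.
  apply lim0_ext_near with (g := fun s =>
    (D1_coef s - dD1_coef s + dD1_coef s * t s + A * t s ^ pred k) / (A * kappa s)
    - u s / (A * kappa s)).
  { apply near0_mono with (2 := near0_kappa). intros s Hs HK.
    rewrite X_coef by auto. destruct (Rmult_neq_0_reg _ _ HK). field. auto. }
  eapply lim0_val; [apply lim0_minus; [apply X_coef_main_lim|]|].
  - apply lim0_div; [apply u_lim|apply lim0_mul; [apply lim0_const|apply kappa_lim]|intro; nra].
  - unfold w0, A in *. field. split; lra.
Qed.

Lemma Y_exp : lim0 (fun s => Y_of s (u s) / t s) (2 * kk * (c - 1) / ((kk - 1) * c)).
Proof.
  pose proof A_ge1.
  apply lim0_ext with (g := fun s => dD1_coef s - A * kk * ((X_of s (u s) - 1) / t s)).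
  { intros s Hs. unfold Y_of, dD1_coef. field; field_side. }
  apply lim0_val with
    ((A * kk * w0 - kk * w0) - A * kk * (kk * (kk - 3) * (c - 1) / ((kk - 1) ^ 2 * c))).
  - apply lim0_minus; [apply dD1_coef_lim|apply lim0_mul; [apply lim0_const|apply X_exp]].
  - unfold w0, A in *. field. split; lra.
Qed.

Lemma Z_exp : lim0 (fun s => (Z_of s (u s) - 1) / t s) 0.
Proof.
  pose proof A_ge1.
  apply lim0_ext with
    (g := fun s => D1_coef s - A * ((X_of s (u s) - 1) / t s) - Y_of s (u s) / t s).
  { intros s Hs. unfold Z_of, D1_coef, A. field; field_side. }
  apply lim0_val with (kk * w0 - A * (kk * (kk - 3) * (c - 1) / ((kk - 1) ^ 2 * c))
                       - 2 * kk * (c - 1) / ((kk - 1) * c)).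
  - apply lim0_minus; [apply lim0_minus; [apply D1_coef_lim|]|apply Y_exp].
    apply lim0_mul; [apply lim0_const|apply X_exp].
  - unfold w0, A in *. field. split; lra.
Qed.

Lemma W_exp : lim0 (fun s => W_of s (u s) / t s) ((c - 1) / c).
Proof. apply lim0_val with w0; [apply W_ratio|unfold w0; field; lra]. Qed.
End VanishingChoice.
End BoundedChoice.

Lemma defect_continuous s a :
  Dt_of s a <> 0 -> 1 - W_of s a <> 0 -> A * kappa s <> 0 -> continuity_pt (defect s) a.
Proof.
  intros H1 H2 H3.
  apply continuity_pt_filterlim. apply (@ex_derive_continuous R_AbsRing R_NormedModule).
  unfold defect, dden, Y_of, X_of, dD1_of, D1_of, W_of, Dt_of, Nt in *.
  auto_derive. repeat split; auto.
Qed.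

Definition admissible s u :=
  1/2 < Dt_of s u /\ 0 < 1 - W_of s u /\ A * kappa s <> 0 /\ 0 < P1 s /\ 0 < t s.

Lemma near0_admissible : near0 (fun s => forall u, -1 <= u <= 1 -> admissible s u).
Proof.
  assert (E1 := lim0_lt _ _ (1/4) t_lim ltac:(lra)).
  assert (E2 := lim0_gt _ _ 0 P1_lim ltac:(lra)).
  assert (E3 := lim0_lt _ _ 2 Pt_lim ltac:(lra)).
  assert (E4 := lim0_gt _ _ 0 Pt_lim ltac:(lra)).
  apply near0_mono with (2 := near0_and _ _ E1 (near0_and _ _ E2
                               (near0_and _ _ E3 (near0_and _ _ E4 near0_kappa)))).
  intros s Hs [H1 [H2 [H3 [H4 H5]]]] u Hu.
  pose proof (t_pos s Hs) as Ht.
  assert (Hb : 1/2 < Dt_of s u) by (unfold Dt_of; nra).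
  unfold admissible. repeat split; auto.
  unfold W_of. assert (0 <= t s / c * Pt s / Dt_of s u).
  { unfold Rdiv. apply Rmult_le_pos; [|left; apply Rinv_0_lt_compat; lra].
    apply Rmult_le_pos; [|lra]. apply Rmult_le_pos; [lra|]. left; apply Rinv_0_lt_compat; lra. }
  lra.
Qed.

(* [H(1) < 0 < H(-1)] for small [s], since [H(u) / t = -u + o(1)]. *)
Lemma defect_signs : near0 (fun s => defect s 1 < 0 /\ 0 < defect s (-1)).
Proof.
  assert (Hratio : forall v, Rabs v <= 1 -> lim0 (fun s => defect s v / t s) (0 - v * (2 - 1))).
  { intros v Hv. apply lim0_ext with (g := fun s => defect_rest s v - v * (2 - Nt s)).
    { intros; apply defect_split; auto. }
    apply lim0_minus; [apply (defect_rest_lim (fun _ => v)); apply near0_all; auto|].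
    apply lim0_mul; [apply lim0_const|apply lim0_minus; [apply lim0_const|apply Nt_lim]]. }
  assert (Hneg := lim0_lt _ _ 0 (Hratio 1 ltac:(rewrite Rabs_R1; lra)) ltac:(lra)).
  assert (Hpos := lim0_gt _ _ 0 (Hratio (-1) ltac:(rewrite Rabs_m1; lra)) ltac:(lra)).
  apply near0_mono with (2 := near0_and _ _ Hneg Hpos). intros s Hs [H1 H2].
  pose proof (t_pos s Hs).
  split.
  - replace (defect s 1) with (defect s 1 / t s * t s) by (field; lra). nra.
  - replace (defect s (-1)) with (defect s (-1) / t s * t s) by (field; lra). nra.
Qed.

(* By the intermediate value theorem, [H] has a root in [[-1, 1]] for each small [s]. *)
Lemma defect_root : exists del, 0 < del /\ exists u : R -> R,
  forall s, 0 < s < del -> -1 <= u s <= 1 /\ defect s (u s) = 0 /\ admissible s (u s).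
Proof.
  destruct (near0_and _ _ near0_admissible defect_signs) as [del [Hd HH]].
  exists del; split; auto.
  assert (Hc : forall s, exists v, 0 < s < del -> -1 <= v <= 1 /\ defect s v = 0 /\ admissible s v).
  { intros s. destruct (Rlt_dec 0 s) as [h1|h1]; [|exists 0; intros; lra].
    destruct (Rlt_dec s del) as [h2|h2]; [|exists 0; intros; lra].
    destruct (HH s (conj h1 h2)) as [Hadm [Hs1 Hs2]].
    destruct (Ranalysis5.IVT_interv (fun v => - defect s v) (-1) 1) as [v [Hv1 Hv2]];
      [|lra|lra|lra|].
    - intros a Ha. apply continuity_pt_opp. destruct (Hadm a Ha) as [g1 [g2 [g3 _]]].
      apply defect_continuous; lra.
    - exists v. intros _. split; auto. split; [lra|]. apply Hadm; auto. }
  apply ClassicalChoice.choice in Hc. destruct Hc as [u Hu]. exists u. auto.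
Qed.

Lemma den_one s u : den k (X_of s u) (Y_of s u) (Z_of s u) 1 = D1_of s u.
Proof. unfold den, Z_of, A, kk. rewrite pow1. ring. Qed.

Lemma dden_one s u : dden k (X_of s u) (Y_of s u) 1 = dD1_of s u.
Proof. unfold dden, Y_of, A, kk. rewrite pow1. ring. Qed.

Lemma den_t s u : A * kappa s <> 0 -> den k (X_of s u) (Y_of s u) (Z_of s u) (t s) = Dt_of s u.
Proof.
  intros Hk. destruct (Rmult_neq_0_reg _ _ Hk) as [H1 H2].
  unfold den, Z_of, Y_of, X_of, Dt_of. unfold kappa, A, kk in *. field. auto.
Qed.

Lemma root_solves s u : admissible s u -> defect s u = 0 ->
  interp_system k c (t s) (P1 s) (L1 s) (Pt s) (Lt s)
    (X_of s u) (Y_of s u) (Z_of s u) (W_of s u).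
Proof.
  intros Hadm Hdef. pose proof Hadm as [G1 [G2 [G3 [G4 G5]]]]. pose proof kk_ge2.
  unfold interp_system. rewrite den_one, dden_one, den_t by auto.
  assert (HD1 : 0 < D1_of s u) by (unfold D1_of; apply Rdiv_lt_0_compat; nra).
  repeat split; try lra.
  - unfold D1_of. fold kk. field. lra.
  - unfold dD1_of, D1_of, A. fold kk. field. lra.
  - unfold W_of. field. lra.
  - replace ((Pt s - Pt s * Lt s / c) * Dt_of s u
             - dden k (X_of s u) (Y_of s u) (t s) * (t s / c * Pt s))
      with (Dt_of s u ^ 2 + defect s u) by (unfold defect, Nt; field; lra).
    rewrite Hdef. field. lra.
Qed.

Theorem interpolation_solution : exists del, 0 < del /\ exists X Y Z W : R -> R,
  (forall s, 0 < s < del ->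
     interp_system k c (t s) (P1 s) (L1 s) (Pt s) (Lt s) (X s) (Y s) (Z s) (W s)) /\
  lim0 (fun s => (X s - 1) / t s) (INR k * (INR k - 3) * (c - 1) / ((INR k - 1) ^ 2 * c)) /\
  lim0 (fun s => Y s / t s) (2 * INR k * (c - 1) / ((INR k - 1) * c)) /\
  lim0 (fun s => (Z s - 1) / t s) 0 /\
  lim0 (fun s => W s / t s) ((c - 1) / c).
Proof.
  destruct defect_root as [del [Hdel [u Hu]]].
  assert (Hbound : near0 (fun s => Rabs (u s) <= 1)).
  { exists del; split; auto. intros s Hs. apply Rabs_le, Hu; auto. }
  assert (Hlim : lim0 u 0).
  { apply root_lim; auto. exists del; split; auto. intros s Hs; apply Hu; auto. }
  exists del; split; auto.
  exists (fun s => X_of s (u s)), (fun s => Y_of s (u s)),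
         (fun s => Z_of s (u s)), (fun s => W_of s (u s)).
  split; [intros s Hs; destruct (Hu s Hs) as [_ [H1 H2]]; apply root_solves; auto|].
  split; [apply X_exp|split; [apply Y_exp|split; [apply Z_exp|apply W_exp]]]; auto.
Qed.
End Interpolation.

(** * The data of [Q_n] *)

(* Under the hypotheses of Lemma 3.2, with [t = s^nu], the product in [Q_n] contributes data
   [p1, pt = 1 + o(t)], [l1, lt = o(t)] to the interpolation system. *)
Section Qn_data.
Variables (n : nat) (d : nat -> nat).
Hypothesis n_ge3 : (3 <= n)%nat.
Hypothesis n_odd : Nat.odd n = true.
Hypothesis d_pos : forall i, (1 <= i <= n)%nat -> (0 < d i)%nat.
Hypothesis inv_sum_lt1 : sumR (fun i => 1 / INR (d i)) n < 1.

Definition n1 := (n - 1)%nat.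
Definition dR i := INR (d i).
Definition DR i := INR (DD d i).
(* Partial sums [e_i = 1/d_1 + ... + 1/d_i], and [S = e_(n-1)]. *)
Definition psum i := sumR (fun j => 1 / INR (d j)) i.
Definition S0 := psum n1.

Lemma n_eq : n = S n1. Proof. unfold n1; lia. Qed.

Lemma dR_pos i : (1 <= i <= n)%nat -> 0 < dR i.
Proof. intros H. unfold dR. apply lt_0_INR. auto. Qed.

Lemma DR_eq i : DR i = dR i + dR (S i).
Proof. unfold DR, DD, dR. apply plus_INR. Qed.

Lemma psum_S k : psum (S k) = psum k + 1 / dR (S k). Proof. reflexivity. Qed.

Lemma psum_mono k k' : (k <= k' <= n)%nat -> psum k <= psum k'.
Proof.
  intros Hk. apply sumR_mono; [lia|]. intros i Hi.
  pose proof (dR_pos i ltac:(lia)). unfold dR in *. left. apply Rdiv_lt_0_compat; lra.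
Qed.

Lemma psum_ge i : (1 <= i <= n)%nat -> 1 / dR i <= psum i.
Proof.
  intros H. destruct i; [lia|]. rewrite psum_S.
  pose proof (psum_mono 0 i ltac:(lia)). unfold psum in *; simpl in *. lra.
Qed.

(* Since [sum 1/d_i < 1], every [d_i >= 2]. *)
Lemma dR_ge2 i : (1 <= i <= n)%nat -> 2 <= dR i.
Proof.
  intros H. pose proof (psum_ge i H). pose proof (psum_mono i n ltac:(lia)).
  fold (psum n) in inv_sum_lt1. pose proof (dR_pos i H).
  assert (1 < dR i).
  { apply (Rmult_lt_reg_r (/ dR i)); [apply Rinv_0_lt_compat; auto|].
    rewrite Rinv_r by lra. unfold Rdiv in *. lra. }
  unfold dR in *. replace 2 with (INR 2) by (simpl; lra). apply le_INR. apply INR_lt. simpl. auto.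
Qed.

Lemma dn_ge2 : 2 <= dR n. Proof. apply dR_ge2. lia. Qed.

Lemma S0_pos : 0 < S0.
Proof.
  pose proof (psum_ge 1 ltac:(lia)). pose proof (psum_mono 1 n1 ltac:(unfold n1; lia)).
  pose proof (dR_pos 1 ltac:(lia)). assert (0 < 1 / dR 1) by (apply Rdiv_lt_0_compat; lra).
  unfold S0. lra.
Qed.

Lemma S0_lt : S0 < 1 - 1 / dR n.
Proof.
  fold (psum n) in inv_sum_lt1. rewrite n_eq, psum_S, <- n_eq in inv_sum_lt1. unfold S0. lra.
Qed.

Lemma nu_eq : nu d n = dR n / (dR n - 1) * S0. Proof. reflexivity. Qed.

Lemma nu_lt1 : nu d n < 1.
Proof.
  rewrite nu_eq. pose proof S0_lt. pose proof dn_ge2.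
  assert (S0 * dR n < dR n - 1).
  { replace (dR n - 1) with ((1 - 1 / dR n) * dR n) by (field; lra). apply Rmult_lt_compat_r; lra. }
  apply (Rmult_lt_reg_r (dR n - 1)); [lra|]. unfold Rdiv.
  replace (dR n * / (dR n - 1) * S0 * (dR n - 1)) with (S0 * dR n) by (field; lra). lra.
Qed.

Lemma nu_gt_S0 : S0 < nu d n.
Proof.
  rewrite nu_eq. pose proof S0_pos. pose proof dn_ge2.
  assert (1 < dR n / (dR n - 1)).
  { apply (Rmult_lt_reg_r (dR n - 1)); [lra|].
    unfold Rdiv. rewrite Rmult_assoc, Rinv_l by lra. lra. }
  nra.
Qed.

Lemma nu_pos : 0 < nu d n. Proof. pose proof nu_gt_S0; pose proof S0_pos; lra. Qed.

Lemma nu_minus_S0 : nu d n - S0 = nu d n / dR n.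
Proof. rewrite nu_eq. pose proof dn_ge2. field. lra. Qed.

(* [D_i e_i > nu]: this makes [b_i^(D_i) = o(t)]. *)
Lemma exponent_beta i : (1 <= i <= n1)%nat -> nu d n < DR i * psum i.
Proof.
  intros Hi. rewrite DR_eq. pose proof (psum_ge i ltac:(unfold n1 in *; lia)).
  pose proof (dR_pos i ltac:(unfold n1 in *; lia)).
  pose proof (dR_pos (S i) ltac:(unfold n1 in *; lia)).
  pose proof nu_lt1.
  assert (1 <= dR i * psum i).
  { replace 1 with (dR i * (1 / dR i)) by (field; lra). apply Rmult_le_compat_l; lra. }
  assert (0 < 1 / dR i) by (apply Rdiv_lt_0_compat; lra).
  assert (0 < dR (S i) * psum i) by (apply Rmult_lt_0_compat; lra).
  lra.
Qed.

(* [D_i (nu - e_i) > nu]: this makes [t^(D_i) / b_i^(D_i) = o(t)]. *)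
Lemma exponent_rho i : (1 <= i <= n1)%nat -> nu d n < DR i * (nu d n - psum i).
Proof.
  intros Hi. rewrite DR_eq.
  pose proof (dR_pos i ltac:(unfold n1 in *; lia)).
  pose proof (dR_pos (S i) ltac:(unfold n1 in *; lia)).
  pose proof nu_lt1. pose proof nu_gt_S0. pose proof nu_pos.
  destruct (Nat.eq_dec i n1) as [E|E].
  - subst i. fold S0. rewrite nu_minus_S0, <- n_eq. pose proof dn_ge2.
    replace ((dR n1 + dR n) * (nu d n / dR n)) with (nu d n + dR n1 * nu d n / dR n)
      by (field; lra).
    assert (0 < dR n1 * nu d n / dR n) by (apply Rdiv_lt_0_compat; [apply Rmult_lt_0_compat|]; lra).
    lra.
  - assert (Hle : psum (S i) <= S0) by (apply psum_mono; unfold n1 in *; lia).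
    rewrite psum_S in Hle.
    assert (1 <= dR (S i) * (nu d n - psum i)).
    { replace 1 with (dR (S i) * (1 / dR (S i))) by (field; lra). apply Rmult_le_compat_l; lra. }
    assert (0 < 1 / dR (S i)) by (apply Rdiv_lt_0_compat; lra).
    assert (0 < dR i * (nu d n - psum i)) by (apply Rmult_lt_0_compat; lra).
    lra.
Qed.

Definition tn s := Rpower s (nu d n).
Definition beta s i := bb d n s i ^ DD d i.
Definition rho s i := tn s ^ DD d i / beta s i.

Lemma dmax_ge i k : (1 <= i <= k)%nat -> (d i <= dmax d k)%nat.
Proof.
  induction k; intros H; [lia|]. simpl. destruct (Nat.eq_dec i (S k)); [subst; lia|].
  specialize (IHk ltac:(lia)). lia.
Qed.

Lemma dmax_pos : 0 < INR (dmax d n).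
Proof.
  apply lt_0_INR. pose proof (dmax_ge 1 n ltac:(lia)). pose proof (d_pos 1 ltac:(lia)). lia.
Qed.

Lemma tau_pos : 0 < tau d n. Proof. unfold tau, Rpower. apply exp_pos. Qed.

Definition c0 := 2 / dR 1 * ln (INR (dmax d n)).
Definition ln_tau_s s := ln (tau d n) + ln s.

Lemma bb_closed s i : 0 < s -> (1 <= i)%nat -> bb d n s i = exp (c0 + psum i * ln_tau_s s).
Proof.
  intros Hs Hi. destruct i as [|i]; [lia|]. clear Hi. induction i as [|i IH].
  - simpl bb. unfold Rpower, c0, ln_tau_s. pose proof dmax_pos. pose proof tau_pos.
    set (q := INR (dmax d n)) in *.
    replace (q * (q * 1) * tau d n * s) with (q * q * tau d n * s) by ring.
    rewrite !ln_mult; try apply Rmult_lt_0_compat; try apply Rmult_lt_0_compat; auto.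
    f_equal. unfold psum; simpl. pose proof (dR_pos 1 ltac:(lia)). unfold dR in *. field. lra.
  - change (bb d n s (S (S i)))
      with (Rpower (tau d n * s) (1 / INR (d (S (S i)))) * bb d n s (S i)).
    rewrite IH. unfold Rpower. rewrite <- exp_plus. f_equal. unfold ln_tau_s.
    rewrite ln_mult; auto using tau_pos. rewrite (psum_S (S i)). unfold dR. ring.
Qed.

Lemma beta_closed s i : 0 < s -> (1 <= i)%nat ->
  beta s i = exp (DR i * (c0 + psum i * ln_tau_s s)).
Proof. intros. unfold beta. rewrite bb_closed, exp_pow by auto. auto. Qed.

Lemma beta_pos s i : 0 < s -> (1 <= i)%nat -> 0 < beta s i.
Proof. intros. rewrite beta_closed by auto. apply exp_pos. Qed.

Lemma tn_pos s : 0 < tn s. Proof. unfold tn, Rpower. apply exp_pos. Qed.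

Lemma tn_pow s k : tn s ^ k = exp (INR k * (nu d n * ln s)).
Proof. unfold tn, Rpower. rewrite exp_pow. auto. Qed.

Lemma tn_lim : lim0 tn 0.
Proof.
  apply lim0_ext with (g := fun s => exp (0 + nu d n * ln s)).
  { intros. rewrite Rplus_0_l. auto. }
  apply lim0_exp_ln, nu_pos.
Qed.

(* [b_i^(D_i)] is a constant times [s^(D_i e_i)], hence [o(t)]. *)
Lemma beta_small i : (1 <= i <= n1)%nat -> lim0 (fun s => beta s i / tn s) 0.
Proof.
  intros Hi. apply lim0_ext with (g := fun s =>
    exp (DR i * (c0 + psum i * ln (tau d n)) + (DR i * psum i - nu d n) * ln s)).
  { intros s Hs. rewrite beta_closed by (auto; lia). unfold tn, Rpower. rewrite exp_div.
    f_equal. unfold ln_tau_s. ring. }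
  apply lim0_exp_ln. pose proof (exponent_beta i Hi). lra.
Qed.

(* [t^(D_i) / b_i^(D_i)] is a constant times [s^(D_i (nu - e_i))], hence [o(t)]. *)
Lemma rho_small i : (1 <= i <= n1)%nat -> lim0 (fun s => rho s i / tn s) 0.
Proof.
  intros Hi. apply lim0_ext with (g := fun s =>
    exp (- (DR i * (c0 + psum i * ln (tau d n))) + (DR i * (nu d n - psum i) - nu d n) * ln s)).
  { intros s Hs. unfold rho. rewrite beta_closed, tn_pow by (auto; lia).
    unfold tn, Rpower. rewrite !exp_div. f_equal. fold (DR i). unfold ln_tau_s. ring. }
  apply lim0_exp_ln. pose proof (exponent_rho i Hi). lra.
Qed.

Lemma near0_beta_rho :
  near0 (fun s => forall i, (1 <= i <= n1)%nat -> beta s i < 1/2 /\ rho s i < 1/2).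
Proof.
  apply near0_forall_fin. intros i Hi.
  apply near0_and; apply lim0_lt with 0; try lra;
    apply (lim0_of_ratio tn (fun s _ => tn_pos s) tn_lim _ 0); auto using beta_small, rho_small.
Qed.

Definition P1 s := prodR (fun i => altp i (1 - beta s i)) n1.
Definition Pt s := prodR (fun i => altp i (1 - rho s i)) n1.
Definition L1 s := sumR (fun i => sgn i * DR i * (beta s i / (1 - beta s i))) n1.
Definition Lt s := sumR (fun i => sgn i * DR i * (rho s i / (1 - rho s i))) n1.

Lemma P1_exp : lim0 (fun s => (P1 s - 1) / tn s) 0.
Proof.
  apply altprod_one_plus_o; [intros; apply tn_pos|apply tn_lim|intros; apply beta_small; auto].
Qed.
Lemma Pt_exp : lim0 (fun s => (Pt s - 1) / tn s) 0.
Proof.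
  apply altprod_one_plus_o; [intros; apply tn_pos|apply tn_lim|intros; apply rho_small; auto].
Qed.
Lemma L1_small : lim0 (fun s => L1 s / tn s) 0.
Proof.
  apply (weighted_sum_o tn (fun s _ => tn_pos s) tn_lim (fun i s => beta s i)
           (fun i => sgn i * DR i)).
  intros; apply beta_small; auto.
Qed.
Lemma Lt_small : lim0 (fun s => Lt s / tn s) 0.
Proof.
  apply (weighted_sum_o tn (fun s _ => tn_pos s) tn_lim (fun i s => rho s i)
           (fun i => sgn i * DR i)).
  intros; apply rho_small; auto.
Qed.

Lemma Qfactor_alt s z i : (1 <= i)%nat -> Qfactor d n s z i = altp i (z ^ DD d i - beta s i).
Proof. intros Hi. apply powerRZ_alt; auto. Qed.

Lemma prod_at_one s : prodR (Qfactor d n s 1) n1 = P1 s.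
Proof. apply prodR_ext. intros i Hi. rewrite Qfactor_alt, pow1 by lia. auto. Qed.

(* [n - 1] is even: the product has as many numerator as denominator factors. *)
Lemma n1_even : Nat.odd n1 = false.
Proof.
  pose proof n_odd as H. rewrite n_eq, Nat.odd_succ in H. rewrite <- Nat.negb_even, H. auto.
Qed.

Lemma sgn_n1 : sgn n1 = -1. Proof. unfold sgn. rewrite n1_even. auto. Qed.

Lemma pow_m1_n1 : (-1) ^ n1 = 1.
Proof.
  assert (Nat.even n1 = true) as Hev by (rewrite <- Nat.negb_odd, n1_even; auto).
  apply Nat.even_spec in Hev. destruct Hev as [j ->]. apply pow_1_even.
Qed.

(* With [z^(D_i) - b_i^(D_i) = - b_i^(D_i) (1 - rho_i)] and an even number of factors. *)
Lemma prod_at_t s : 0 < s ->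
  prodR (Qfactor d n s (tn s)) n1 = prodR (fun i => altp i (beta s i)) n1 * Pt s.
Proof.
  intros Hs.
  rewrite (prodR_ext _ (fun i => (altp i (-1) * altp i (beta s i)) * altp i (1 - rho s i))).
  2:{ intros i Hi. rewrite Qfactor_alt by lia. rewrite <- !altp_mult. f_equal. unfold rho.
      pose proof (beta_pos s i Hs ltac:(lia)). field. lra. }
  rewrite !prodR_mult, (prodR_ext _ (fun _ => -1)) by (intros; apply altp_m1).
  rewrite prodR_const, pow_m1_n1. unfold Pt. ring.
Qed.

(* Telescoping of the alternating sums of [D_i = d_i + d_(i+1)]. *)
Lemma sum_sgn_D k : (k < n)%nat -> sumR (fun i => sgn i * DR i) k = dR 1 + sgn k * dR (S k).
Proof.
  induction k as [|k IH]; intros Hk; [unfold sgn; simpl; ring|].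
  simpl sumR. rewrite IH, sgn_S, DR_eq by lia. ring.
Qed.

Lemma sum_sgn_D_psum k : (k < n)%nat ->
  sumR (fun i => sgn i * DR i * psum i) k
  = (if Nat.odd k then 1 else 0) + sgn k * dR (S k) * psum k.
Proof.
  induction k as [|k IH]; intros Hk; [unfold psum, sgn; simpl; ring|].
  simpl sumR. rewrite IH, DR_eq, psum_S by lia. pose proof (dR_pos (S k) ltac:(lia)).
  unfold sgn. rewrite Nat.odd_succ, <- Nat.negb_odd. destruct (Nat.odd k); simpl; field; lra.
Qed.

Lemma prod_beta_closed s : 0 < s ->
  prodR (fun i => altp i (beta s i)) n1 = exp (c0 * (dR 1 - dR n) - dR n * S0 * ln_tau_s s).
Proof.
  intros Hs.
  rewrite (prodR_ext _ (fun i => exp (sgn i * (DR i * (c0 + psum i * ln_tau_s s))))).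
  2:{ intros i Hi. rewrite beta_closed by (auto; lia). apply altp_exp. }
  rewrite prodR_exp. f_equal.
  rewrite (sumR_ext _ (fun i => c0 * (sgn i * DR i) + ln_tau_s s * (sgn i * DR i * psum i)))
    by (intros; ring).
  rewrite sumR_plus, !sumR_scal, sum_sgn_D, sum_sgn_D_psum by (unfold n1; lia).
  rewrite n1_even, sgn_n1, <- n_eq. fold S0. ring.
Qed.

(* The choice of [tau] is exactly what makes [d_1 t^(d_n) prod_i b_i^(+-D_i) = t / d_n]. *)
Lemma ln_tau_eq : dR n * S0 * ln (tau d n) =
  ln (dR 1) + ln (dR n) + 2 * (dR 1 - dR n) / dR 1 * ln (INR (dmax d n)).
Proof.
  unfold tau, Rpower. rewrite ln_exp.
  rewrite (sumR_ext _ (fun i => INR (d n) * (1 / INR (d i)))).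
  2:{ intros i Hi. pose proof (dR_pos i ltac:(unfold n1 in *; lia)). unfold dR in *. field. lra. }
  rewrite sumR_scal. fold (psum (n - 1)) n1 S0 (dR n) (dR 1).
  pose proof S0_pos. pose proof dn_ge2. pose proof (dR_pos 1 ltac:(lia)).
  rewrite ln_mult, ln_mult, ln_exp;
    try lra; try apply Rmult_lt_0_compat; try lra; try apply exp_pos.
  field. lra.
Qed.

Lemma normalization s : 0 < s ->
  dR 1 * tn s ^ d n * prodR (fun i => altp i (beta s i)) n1 = tn s / dR n.
Proof.
  intros Hs. rewrite prod_beta_closed, tn_pow by auto. unfold tn, Rpower.
  pose proof dn_ge2. pose proof (dR_pos 1 ltac:(lia)).
  replace (exp (nu d n * ln s) / dR n) with (exp (nu d n * ln s - ln (dR n)))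
    by (rewrite <- exp_div, exp_ln; lra).
  rewrite <- (exp_ln (dR 1)) at 1 by lra.
  rewrite <- !exp_plus. f_equal. fold (dR n).
  assert (H2 : dR n * nu d n = nu d n + dR n * S0) by (rewrite nu_eq; field; lra).
  unfold ln_tau_s, c0. rewrite Rmult_plus_distr_l, ln_tau_eq.
  replace (dR n * (nu d n * ln s)) with ((dR n * nu d n) * ln s) by ring. rewrite H2.
  field. lra.
Qed.

(* The logarithmic derivative of [prod_(i <= k) (z^(D_i) - b_i^(D_i))^((-1)^(i-1))]. *)
Definition logder s z k :=
  sumR (fun i => sgn i * DR i * (z ^ pred (DD d i) / (z ^ DD d i - beta s i))) k.

Lemma derivable_val f x l l' : derivable_pt_lim f x l -> l = l' -> derivable_pt_lim f x l'.
Proof. intros H ->; auto. Qed.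

Lemma Qfactor_derivable s z i : (1 <= i)%nat -> z ^ DD d i - beta s i <> 0 ->
  derivable_pt_lim (fun z => Qfactor d n s z i) z
    (Qfactor d n s z i * (sgn i * DR i * (z ^ pred (DD d i) / (z ^ DD d i - beta s i)))).
Proof.
  intros Hi Hz. rewrite Qfactor_alt by auto.
  apply derivable_pt_lim_ext with (f := fun z => altp i (z ^ DD d i - beta s i)).
  { intros w. rewrite Qfactor_alt; auto. }
  apply is_derive_Reals. unfold altp, sgn, DR. destruct (Nat.odd i); auto_derive; auto; field; auto.
Qed.

Lemma prod_derivable s z k : (forall i, (1 <= i <= k)%nat -> z ^ DD d i - beta s i <> 0) ->
  derivable_pt_lim (fun z => prodR (Qfactor d n s z) k) z
    (prodR (Qfactor d n s z) k * logder s z k).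
Proof.
  induction k as [|k IH]; intros Hz.
  - simpl. eapply derivable_val; [apply derivable_pt_lim_const|unfold logder; simpl; ring].
  - apply derivable_pt_lim_ext
      with (f := fun z => prodR (Qfactor d n s z) k * Qfactor d n s z (S k)); [reflexivity|].
    eapply derivable_val; [apply derivable_pt_lim_mult|].
    + apply IH. intros; apply Hz; lia.
    + apply Qfactor_derivable; [lia|apply Hz; lia].
    + unfold logder. simpl. ring.
Qed.

Lemma Qn_derivable s X Y Z W z :
  (forall i, (1 <= i <= n1)%nat -> z ^ DD d i - beta s i <> 0) -> den (d 1) X Y Z z <> 0 ->
  derivable_pt_lim (Qn d n s X Y Z W) z
   ((dR 1 * (dR n * z ^ pred (d n) * prodR (Qfactor d n s z) n1
       + z ^ d n * (prodR (Qfactor d n s z) n1 * logder s z n1)) * den (d 1) X Y Z z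
     - dden (d 1) X Y z * (dR 1 * z ^ d n * prodR (Qfactor d n s z) n1))
    / den (d 1) X Y Z z ^ 2).
Proof.
  intros Hf HD.
  apply derivable_pt_lim_ext with (f := fun z => (fun z => dR 1 * z ^ d n) z / den (d 1) X Y Z z
     * (fun z => prodR (Qfactor d n s z) n1) z + (fun _ => W) z); [reflexivity|].
  eapply derivable_val.
  - apply derivable_pt_lim_plus; [apply derivable_pt_lim_mult|apply derivable_pt_lim_const].
    + apply derivable_pt_lim_div; auto using den_derivable.
      apply derivable_pt_lim_scal, derivable_pt_lim_pow.
    + apply prod_derivable; auto.
  - unfold Rsqr, dR. field. auto.
Qed.

Lemma logder_one s : (forall i, (1 <= i <= n1)%nat -> beta s i <> 1) ->
  logder s 1 n1 = (dR 1 - dR n) + L1 s.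
Proof.
  intros Hb. unfold logder, L1.
  rewrite (sumR_ext _ (fun i => sgn i * DR i + sgn i * DR i * (beta s i / (1 - beta s i)))).
  2:{ intros i Hi. rewrite !pow1. specialize (Hb i Hi). field. intro; apply Hb; lra. }
  rewrite sumR_plus, sum_sgn_D, sgn_n1, <- n_eq by (unfold n1; lia). ring.
Qed.

Lemma logder_t s : 0 < s -> (forall i, (1 <= i <= n1)%nat -> rho s i <> 1) ->
  tn s * logder s (tn s) n1 = - Lt s.
Proof.
  intros Hs Hr. unfold logder, Lt.
  replace (- sumR _ n1) with (-1 * sumR (fun i => sgn i * DR i * (rho s i / (1 - rho s i))) n1)
    by ring.
  rewrite <- !sumR_scal. apply sumR_ext. intros i Hi. specialize (Hr i Hi).
  pose proof (beta_pos s i Hs ltac:(lia)). pose proof (tn_pos s).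
  assert (E : tn s ^ DD d i = tn s * tn s ^ pred (DD d i)).
  { pose proof (d_pos i ltac:(unfold n1 in *; lia)). unfold DD.
    replace (d i + d (S i))%nat with (S (pred (d i + d (S i)))) at 1 by lia. auto. }
  unfold rho in *. rewrite E in *.
  assert (tn s * tn s ^ pred (DD d i) - beta s i <> 0).
  { intro H2. apply Hr. replace (tn s * tn s ^ pred (DD d i)) with (beta s i) by lra. field. lra. }
  field. repeat split; lra.
Qed.

Lemma Qn_at_one s X Y Z W : Qn d n s X Y Z W 1 = dR 1 * P1 s / den (d 1) X Y Z 1 + W.
Proof.
  unfold Qn. change ((INR (d 1) - 1) * X * 1 ^ d 1 + Y * 1 + Z) with (den (d 1) X Y Z 1).
  change (n - 1)%nat with n1. rewrite prod_at_one, pow1. unfold dR, Rdiv. ring.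
Qed.

Lemma Qn_at_t s X Y Z W : 0 < s ->
  Qn d n s X Y Z W (tn s) = tn s / dR n * Pt s / den (d 1) X Y Z (tn s) + W.
Proof.
  intros Hs. unfold Qn.
  change ((INR (d 1) - 1) * X * tn s ^ d 1 + Y * tn s + Z) with (den (d 1) X Y Z (tn s)).
  change (n - 1)%nat with n1. rewrite prod_at_t, <- normalization by auto. unfold dR, Rdiv. ring.
Qed.

Lemma dQn_at_one s X Y Z W :
  (forall i, (1 <= i <= n1)%nat -> beta s i <> 1) -> den (d 1) X Y Z 1 <> 0 ->
  derivable_pt_lim (Qn d n s X Y Z W) 1
    ((dR 1 * (dR n * P1 s + P1 s * (dR 1 - dR n + L1 s)) * den (d 1) X Y Z 1
      - dden (d 1) X Y 1 * (dR 1 * P1 s)) / den (d 1) X Y Z 1 ^ 2).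
Proof.
  intros Hb HD. eapply derivable_val; [apply Qn_derivable; auto|].
  - intros i Hi. rewrite pow1. specialize (Hb i Hi). lra.
  - rewrite prod_at_one, logder_one, !pow1 by auto. f_equal. ring.
Qed.

Lemma dQn_at_t s X Y Z W : 0 < s ->
  (forall i, (1 <= i <= n1)%nat -> rho s i <> 1) -> den (d 1) X Y Z (tn s) <> 0 ->
  derivable_pt_lim (Qn d n s X Y Z W) (tn s)
    (((Pt s - Pt s * Lt s / dR n) * den (d 1) X Y Z (tn s)
      - dden (d 1) X Y (tn s) * (tn s / dR n * Pt s)) / den (d 1) X Y Z (tn s) ^ 2).
Proof.
  intros Hs Hr HD. pose proof (tn_pos s). pose proof dn_ge2.
  eapply derivable_val; [apply Qn_derivable; auto|].
  - intros i Hi Hc. apply (Hr i Hi). unfold rho. rewrite <- (Rminus_diag_uniq _ _ Hc).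
    field. pose proof (beta_pos s i Hs ltac:(lia)). lra.
  - set (P0 := prodR (fun i => altp i (beta s i)) n1).
    assert (Hnorm := normalization s Hs). fold P0 in Hnorm.
    assert (Et : tn s ^ d n = tn s * tn s ^ pred (d n)).
    { pose proof (d_pos n ltac:(lia)). replace (d n) with (S (pred (d n))) at 1 by lia. auto. }
    (* the normalization, divided by [t] *)
    assert (Hnorm' : dR 1 * tn s ^ pred (d n) * P0 = 1 / dR n).
    { rewrite Et in Hnorm. apply (Rmult_eq_reg_l (tn s)); [|lra].
      replace (tn s * (dR 1 * tn s ^ pred (d n) * P0))
        with (dR 1 * (tn s * tn s ^ pred (d n)) * P0) by ring.
      rewrite Hnorm. field. lra. }
    assert (Hlog := logder_t s Hs Hr).
    rewrite prod_at_t by auto. fold P0.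
    replace (dR 1 * (dR n * tn s ^ pred (d n) * (P0 * Pt s)
                     + tn s ^ d n * (P0 * Pt s * logder s (tn s) n1)))
      with (Pt s - Pt s * Lt s / dR n).
    2:{ transitivity ((dR 1 * tn s ^ pred (d n) * P0)
                      * (dR n * Pt s + Pt s * (tn s * logder s (tn s) n1))).
        - rewrite Hnorm', Hlog. field. lra.
        - rewrite Et. ring. }
    replace (dR 1 * tn s ^ d n * (P0 * Pt s)) with (tn s / dR n * Pt s) by (rewrite <- Hnorm; ring).
    reflexivity.
Qed.

Lemma Qn_interpolates s X Y Z W : 0 < s ->
  (forall i, (1 <= i <= n1)%nat -> beta s i < 1/2 /\ rho s i < 1/2) ->
  interp_system (d 1) (dR n) (tn s) (P1 s) (L1 s) (Pt s) (Lt s) X Y Z W ->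
  Qn d n s X Y Z W 1 = 1 /\ derivable_pt_lim (Qn d n s X Y Z W) 1 1 /\
  Qn d n s X Y Z W (tn s) = tn s /\ derivable_pt_lim (Qn d n s X Y Z W) (tn s) 1.
Proof.
  intros Hs Hsmall [HD1 [HDt [E1 [E2 [E3 E4]]]]].
  assert (Hb : forall i, (1 <= i <= n1)%nat -> beta s i <> 1)
    by (intros i Hi; destruct (Hsmall i Hi); lra).
  assert (Hr : forall i, (1 <= i <= n1)%nat -> rho s i <> 1)
    by (intros i Hi; destruct (Hsmall i Hi); lra).
  split; [|split; [|split]].
  - rewrite Qn_at_one. exact E1.
  - eapply derivable_val; [apply dQn_at_one; auto|exact E2].
  - rewrite Qn_at_t by auto. exact E3.
  - eapply derivable_val; [apply dQn_at_t; auto|exact E4].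
Qed.

Lemma d1_ge2 : (2 <= d 1)%nat.
Proof. apply INR_le. pose proof (dR_ge2 1 ltac:(lia)). unfold dR in *. simpl. lra. Qed.

Lemma Qn_system_solution : exists del, 0 < del /\ exists X Y Z W : R -> R,
  (forall s, 0 < s < del ->
     interp_system (d 1) (dR n) (tn s) (P1 s) (L1 s) (Pt s) (Lt s) (X s) (Y s) (Z s) (W s)) /\
  lim0 (fun s => (X s - 1) / tn s)
    (INR (d 1) * (INR (d 1) - 3) * (dR n - 1) / ((INR (d 1) - 1) ^ 2 * dR n)) /\
  lim0 (fun s => Y s / tn s) (2 * INR (d 1) * (dR n - 1) / ((INR (d 1) - 1) * dR n)) /\
  lim0 (fun s => (Z s - 1) / tn s) 0 /\
  lim0 (fun s => W s / tn s) ((dR n - 1) / dR n).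
Proof.
  exact (interpolation_solution (d 1) (dR n) tn P1 L1 Pt Lt d1_ge2 dn_ge2 (fun s _ => tn_pos s)
           tn_lim P1_exp L1_small Pt_exp Lt_small).
Qed.
End Qn_data.

Theorem lemma3p2 (n : nat) (d : nat -> nat)
  (hn3 : (3 <= n)%nat) (hnodd : Nat.odd n = true)
  (hdpos : forall i, (1 <= i <= n)%nat -> (0 < d i)%nat)
  (hsum : sumR (fun i => 1 / INR (d i)) n < 1) :
  exists delta : R, 0 < delta /\
  exists X Y Z W : R -> R,
    (forall s, 0 < s < delta ->
       Qn d n s (X s) (Y s) (Z s) (W s) 1 = 1 /\
       derivable_pt_lim (Qn d n s (X s) (Y s) (Z s) (W s)) 1 1 /\
       Qn d n s (X s) (Y s) (Z s) (W s) (Rpower s (nu d n)) = Rpower s (nu d n) /\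
       derivable_pt_lim (Qn d n s (X s) (Y s) (Z s) (W s)) (Rpower s (nu d n)) 1) /\
    limit1_in (fun s => (X s - 1) / Rpower s (nu d n)) (fun s => 0 < s)
      (INR (d 1%nat) * (INR (d 1%nat) - 3) * (INR (d n) - 1)
       / ((INR (d 1%nat) - 1) ^ 2 * INR (d n))) 0 /\
    limit1_in (fun s => Y s / Rpower s (nu d n)) (fun s => 0 < s)
      (2 * INR (d 1%nat) * (INR (d n) - 1)
       / ((INR (d 1%nat) - 1) * INR (d n))) 0 /\
    limit1_in (fun s => (Z s - 1) / Rpower s (nu d n)) (fun s => 0 < s) 0 0 /\
    limit1_in (fun s => W s / Rpower s (nu d n)) (fun s => 0 < s)
      ((INR (d n) - 1) / INR (d n)) 0.
Proof.
  destruct (Qn_system_solution n d hn3 hdpos hsum)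
    as [del0 [Hdel0 [X [Y [Z [W [Hsys Hlims]]]]]]].
  destruct (near0_beta_rho n d hn3 hdpos hsum) as [del1 [Hdel1 Hsmall]].
  exists (Rmin del0 del1); split; [apply Rmin_glb_lt; auto|].
  exists X, Y, Z, W. split; [|exact Hlims].
  intros s Hs. pose proof (Rmin_l del0 del1). pose proof (Rmin_r del0 del1).
  apply (Qn_interpolates n d hn3 hnodd hdpos hsum); [lra|apply Hsmall; lra|apply Hsys; lra].
Qed.
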